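(* Let $\mathcal{A}$ be a quantum query algorithm with a $q$-bit classical witness deciding spectral Forrelation (as described in the context) that makes $t$ queries to $S$ and $t$ queries to $U$. Let $(S,U)$ be at least $\frac{59}{100}$-spectrally Forrelated, let $\Delta$ be a subset of the set of elements of $S$ such that $(\Delta,U)$ is at most $\frac{57}{100}$-spectrally Forrelated, and let $w$ be a witness such that $\mathcal{A}^{(S,U)}(w)$ accepts with probability at least $2/3$. Then $\mathsf{Sampler}^U(w,\Delta)$ makes $t$ queries to $U$, no queries to $S$, and outputs an element of $S\setminus\Delta$ with probability at least $\frac{1}{36t^2}$.
   Context: For sets $S,U\subseteq\{0,1\}^n$ (multisets are treated as their underlying sets), with $\Pi_S=\sum_{x\in S}|x\rangle\langle x|$, $(S,U)$ is $\alpha$-spectrally Forrelated for $\alpha=\|\Pi_UH^{\otimes n}\Pi_S\|_{\mathrm{op}}^2$. The algorithm $\mathcal{A}$ satisfies: if $(S,U)$ is at least $\frac{59}{100}$-spectrally Forrelated, some $w\in\{0,1\}^q$ makes $\mathcal{A}^{(S,U)}(w)$ accept with probability $\ge2/3$; if at most $\frac{57}{100}$-spectrally Forrelated, every $w$ is accepted with probability $\le1/3$. Oracles are phase oracles, e.g. $\mathcal{O}_S|b,x\rangle|z\rangle=(-1)^{b\cdot\delta(x\in S)}|b,x\rangle|z\rangle$. Write the state of $\mathcal{A}^{(S,U)}(w)$ before its final measurement of the first qubit as $V_t\mathcal{O}_SV_{t-1}\mathcal{O}_S\cdots\mathcal{O}_SV_0|w,0\rangle$, where the unitaries $V_j$ include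 the queries to $U$. $\mathsf{Sampler}^U(w,\Delta)$: sample $j\in\{0,\dots,t-1\}$ uniformly; prepare $V_j\mathcal{O}_\Delta V_{j-1}\mathcal{O}_\Delta\cdots\mathcal{O}_\Delta V_0|w,0\rangle$ where $\mathcal{O}_\Delta|b,x\rangle|z\rangle=(-1)^{b\cdot\delta(x\in\Delta)}|b,x\rangle|z\rangle$; measure in the standard basis obtaining $(b,x,z)$; if $x\in\Delta$ output the lexicographically first string not in $\Delta$, else output $x$. *)

From HB Require Import structures.
From mathcomp Require Import all_boot all_order all_algebra.
From mathcomp Require Import complex.
From mathcomp Require Import classical_sets reals.
Set Implicit Arguments. Unset Strict Implicit. Unset Printing Implicit Defensive.
Import Order.TTheory GRing.Theory Num.Theory.
Local Open Scope ring_scope.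

Section QueryModel.
Variable R : realType.
Local Notation C := R[i].

Definition sqn (z : C) : R := let: Complex a b := z in a ^+ 2 + b ^+ 2.
Definition cconj (z : C) : C := let: Complex a b := z in Complex a (- b).

Definition bits (n : nat) := n.-tuple bool.

Definition bdot n (x y : bits n) : bool :=
  odd (\sum_(i < n) (tnth x i && tnth y i)).

Definition hadamard n (y x : bits n) : C :=
  Complex ((-1) ^+ bdot y x * (Num.sqrt (2 ^+ n : R))^-1) 0.

Definition vnorm2 (T : finType) (v : T -> C) : R := \sum_(a : T) sqn (v a).

Definition matapp (T : finType) (M : T -> T -> C) (v : T -> C) : T -> C :=
  fun a => \sum_(b : T) M a b * v b.

Definition opnorm2 (T : finType) (M : T -> T -> C) : R :=
  sup [set r : R | exists v : T -> C, vnorm2 v != 0 /\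
                   r = vnorm2 (matapp M v) / vnorm2 v].

Definition projHproj n (S U : {set bits n}) (y x : bits n) : C :=
  if (y \in U) && (x \in S) then hadamard y x else 0.

(* (S,U) is alpha-spectrally Forrelated for alpha = forr S U *)
Definition forr n (S U : {set bits n}) : R := opnorm2 (projHproj S U).

(* ---------- registers |b, x>|z>, z = (witness register, ancillas) ---------- *)
Definition basis (n q k : nat) :=
  (bool * bits n * (bits q * bits k))%type.

Definition init n q k (w : bits q) : basis n q k :=
  (false, [tuple of nseq n false], (w, [tuple of nseq k false])).

Definition ket (T : finType) (a : T) : T -> C := fun c => if c == a then 1 else 0.

Definition phase_oracle n q k (D : {set bits n}) (psi : basis n q k -> C)
  : basis n q k -> C :=
  fun a => if a.1.1 && (a.1.2 \in D) then - psi a else psi a.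

(* gates of the unitaries V_j : fixed matrices, or a query to U *)
Inductive gate (n q k : nat) :=
  | GFix of (basis n q k -> basis n q k -> C)
  | GQU.

Definition isQU n q k (g : gate n q k) : bool := if g is GQU then true else false.

Definition unitary (T : finType) (M : T -> T -> C) : Prop :=
  forall a b : T, \sum_(c : T) cconj (M c a) * M c b = (a == b)%:R.

Definition gate_ok n q k (g : gate n q k) : Prop :=
  if g is GFix M then unitary M else True.

Definition apply_gate n q k (U : {set bits n}) (g : gate n q k)
  (psi : basis n q k -> C) : basis n q k -> C :=
  match g with GFix M => matapp M psi | GQU => phase_oracle U psi end.

Definition apply_V n q k (U : {set bits n}) (V : seq (gate n q k))
  (psi : basis n q k -> C) : basis n q k -> C :=
  foldl (fun phi g => apply_gate U g phi) psi V.

Fixpoint run n q k (V : nat -> seq (gate n q k)) (D U : {set bits n})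
  (w : bits q) (j : nat) : basis n q k -> C :=
  match j with
  | 0 => apply_V U (V 0%N) (ket (@init n q k w))
  | j'.+1 => apply_V U (V j) (phase_oracle D (run V D U w j'))
  end.

(* acceptance probability of A^{(S,U)}(w) (t queries to S):
   measure the first qubit b of V_t O_S ... O_S V_0 |w,0> and accept on 1 *)
Definition accept_prob n q k (t : nat) (V : nat -> seq (gate n q k))
  (S U : {set bits n}) (w : bits q) : R :=
  \sum_(a : basis n q k | a.1.1) sqn (run V S U w t a).

Fixpoint lexle (s t : seq bool) : bool :=
  match s, t with
  | [::], _ => true
  | _ :: _, [::] => false
  | a :: s', b :: t' => (~~ a && b) || ((a == b) && lexle s' t')
  end.

Definition lexfirst_notin n (D : {set bits n}) : bits n :=
  match [pick y : bits n | (y \notin D) &&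
           [forall z : bits n, (z \notin D) ==> lexle y z]] with
  | Some y => y
  | None => [tuple of nseq n false]
  end.

Definition sampler_out n (D : {set bits n}) (x : bits n) : bits n :=
  if x \in D then lexfirst_notin D else x.

(* probability that Sampler^U(w, D) outputs y:
   j uniform in {0..t-1}, measure V_j O_D ... O_D V_0 |w,0> in the standard basis *)
Definition sampler_prob n q k (t : nat) (V : nat -> seq (gate n q k))
  (U D : {set bits n}) (w : bits q) (y : bits n) : R :=
  (t%:R)^-1 * \sum_(j < t) \sum_(a : basis n q k | sampler_out D a.1.2 == y)
                             sqn (run V D U w j a).

(* number of queries to U made by Sampler when it samples j (it runs V_0..V_j) *)
Definition sampler_U_queries n q k (V : nat -> seq (gate n q k)) (j : nat) : nat :=
  (\sum_(i < j.+1) count (@isQU n q k) (V i))%N.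

End QueryModel.

From mathcomp Require Import all_boot all_order all_algebra.
From mathcomp Require Import complex.
From mathcomp Require Import boolp reals functions.
From mathcomp Require Import ring lra.
From Stdlib Require List.
Set Implicit Arguments. Unset Strict Implicit. Unset Printing Implicit Defensive.
Import Order.TTheory GRing.Theory Num.Theory.
Local Open Scope ring_scope.

(* The proof is the hybrid argument of Bennett, Bernstein, Brassard and Vazirani.
   Running A^(D,U)(w) instead of A^(S,U)(w) changes the acceptance probability by
   at least 2/3 - 1/3, and a measurement probability moves by at most the Euclidean
   distance between the states, so the two final states are at distance >= 1/3.
   Swapping O_S for O_D one query at a time, and using that all other steps are
   isometries, bounds that distance by sum_j ||(O_S - O_D) psi_j||, where psi_j is
   the state of A^(D,U)(w) before its j-th S-query; as D <= S, the j-th term is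
   2 sqrt(m_j), m_j being the weight of psi_j on query strings in S \ D.  By
   Cauchy-Schwarz, 1/9 <= 4 t sum_j m_j, and Sampler, which measures a uniformly
   chosen psi_j, outputs an element of S \ D with probability at least
   (1/t) sum_j m_j >= 1 / (36 t^2). *)

Local Notation re := complex.Re.
Local Notation im := complex.Im.

Section Amplitudes.
Variable R : realType.
Implicit Types z y : R[i].

Definition redot z y : R := re z * re y + im z * im y.

Lemma sqnE z : sqn z = re z ^+ 2 + im z ^+ 2.
Proof. by case: z. Qed.

Lemma sqn_ge0 z : 0 <= sqn z.
Proof. by rewrite sqnE addr_ge0 ?sqr_ge0. Qed.

Lemma sqn0 : sqn (0 : R[i]) = 0.
Proof. by rewrite sqnE /= expr0n addr0. Qed.

Lemma sqnN z : sqn (- z) = sqn z.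
Proof. by case: z => a b /=; ring. Qed.

Lemma sqnD z y : sqn (z + y) = sqn z + sqn y + 2 * redot z y.
Proof. by case: z y => a b [c d]; rewrite /redot /=; ring. Qed.

Lemma sqnB z y : sqn (z - y) = sqn z + sqn y - 2 * redot z y.
Proof. by case: z y => a b [c d]; rewrite /redot /=; ring. Qed.

Lemma sqn_mulC z : (sqn z)%:C%C = (z^*)%C * z.
Proof.
by case: z => a b; apply/eqP; rewrite eq_complex /=; apply/andP; split; apply/eqP; ring.
Qed.

Lemma cconjE z : cconj z = (z^*)%C.
Proof. by case: z. Qed.

Lemma cauchy_schwarz_redot (I : finType) (P : pred I) (u v : I -> R[i]) :
  (\sum_(i | P i) redot (u i) (v i)) ^+ 2 <=
  (\sum_(i | P i) sqn (u i)) * (\sum_(i | P i) sqn (v i)).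
Proof.
set s := \sum_(i | P i) _; set X := \sum_(i | P i) _; set Y := \sum_(i | P i) _.
pose lagrange i j := sqn (u i) * sqn (v j) + sqn (u j) * sqn (v i)
                     - 2 * (redot (u i) (v i) * redot (u j) (v j)).
(* [lagrange i j] is the squared norm of [u i ⊗ v j - v i ⊗ u j] in R^2 ⊗ R^2. *)
have lagrange_ge0 i j : 0 <= lagrange i j.
  rewrite /lagrange !sqnE /redot.
  case: (u i) (v i) (u j) (v j) => [a1 a2] [b1 b2] [c1 c2] [d1 d2] /=.
  set e := _ - _; have -> : e = (a1 * d1 - b1 * c1) ^+ 2 + (a1 * d2 - b1 * c2) ^+ 2
                             + (a2 * d1 - b2 * c1) ^+ 2 + (a2 * d2 - b2 * c2) ^+ 2.
    by rewrite /e; ring.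
  by rewrite !addr_ge0 ?sqr_ge0.
have : 0 <= \sum_(i | P i) \sum_(j | P j) lagrange i j.
  by do 2!apply: sumr_ge0 => ? _.
have -> : \sum_(i | P i) \sum_(j | P j) lagrange i j = 2 * (X * Y - s ^+ 2).
  rewrite /lagrange.
  transitivity (\sum_(i | P i)
      (sqn (u i) * Y + X * sqn (v i) - 2 * (redot (u i) (v i) * s))).
    by apply: eq_bigr => i _; rewrite sumrB big_split mulr_sumr mulr_suml !mulr_sumr.
  rewrite sumrB big_split /= -mulr_suml -mulr_sumr -mulr_sumr -mulr_suml -/X -/Y -/s; ring.
by rewrite pmulr_rge0 // subr_ge0.
Qed.

Lemma cauchy_schwarz_redot_sqrt (I : finType) (P : pred I) (u v : I -> R[i]) :
  \sum_(i | P i) redot (u i) (v i) <=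
  Num.sqrt (\sum_(i | P i) sqn (u i)) * Num.sqrt (\sum_(i | P i) sqn (v i)).
Proof.
have sum_ge0 (w : I -> R[i]) : 0 <= \sum_(i | P i) sqn (w i).
  by apply: sumr_ge0 => i _; apply: sqn_ge0.
rewrite -sqrtrM // (le_trans (ler_norm _)) // -sqrtr_sqr ler_sqrt ?mulr_ge0 //.
exact: cauchy_schwarz_redot.
Qed.

Lemma sqr_sum_le_card (I : finType) (r : I -> R) :
  (\sum_i r i) ^+ 2 <= #|I|%:R * \sum_i r i ^+ 2.
Proof.
pose u i := (r i)%:C%C.
have redot_u1 i : redot (u i) 1 = r i by rewrite /redot /= mulr1 mulr0 addr0.
have sqn_u i : sqn (u i) = r i ^+ 2 by rewrite sqnE /= expr0n addr0.
have sqn1 : sqn (1 : R[i]) = 1 by rewrite sqnE /= expr1n expr0n addr0.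
have := cauchy_schwarz_redot xpredT u (fun=> 1).
rewrite (eq_bigr _ (fun i _ => redot_u1 i)) (eq_bigr _ (fun i _ => sqn_u i)).
by rewrite (eq_bigr _ (fun i _ => sqn1)) sumr_const mulrC.
Qed.

End Amplitudes.

Section Vectors.
Variables (R : realType) (T : finType).
Implicit Types u v psi phi : T -> R[i].

Definition vnorm v : R := Num.sqrt (vnorm2 v).

Definition outcome_prob (P : pred T) v : R := \sum_(a | P a) sqn (v a).

Lemma vnorm2_ge0 v : 0 <= vnorm2 v.
Proof. by apply: sumr_ge0 => a _; apply: sqn_ge0. Qed.

Lemma outcome_prob_ge0 (P : pred T) v : 0 <= outcome_prob P v.
Proof. by apply: sumr_ge0 => a _; apply: sqn_ge0. Qed.

Lemma vnorm2D u v :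
  vnorm2 (u + v) = vnorm2 u + vnorm2 v + 2 * \sum_a redot (u a) (v a).
Proof. by rewrite /vnorm2 mulr_sumr -!big_split; apply: eq_bigr => a _; apply: sqnD. Qed.

Lemma vnorm2B u v :
  vnorm2 (u - v) = vnorm2 u + vnorm2 v - 2 * \sum_a redot (u a) (v a).
Proof.
by rewrite /vnorm2 mulr_sumr -big_split -sumrB; apply: eq_bigr => a _; apply: sqnB.
Qed.

Lemma vnormD_le u v : vnorm (u + v) <= vnorm u + vnorm v.
Proof.
have u0 := vnorm2_ge0 u; have v0 := vnorm2_ge0 v.
have cs : \sum_a redot (u a) (v a) <= vnorm u * vnorm v :=
  cauchy_schwarz_redot_sqrt xpredT u v.
rewrite -ler_sqr ?nnegrE ?addr_ge0 ?sqrtr_ge0 //.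
by rewrite sqrrD !sqr_sqrtr ?vnorm2_ge0 // vnorm2D; lra.
Qed.

Lemma vnormB_le u v phi : vnorm (u - phi) <= vnorm (u - v) + vnorm (v - phi).
Proof. by have := vnormD_le (u - v) (v - phi); rewrite addrA subrK. Qed.

Lemma matappB (M : T -> T -> R[i]) : {morph matapp M : u v / u - v}.
Proof.
move=> u v; apply/funext => a; rewrite /matapp !fctE -sumrB.
by apply: eq_bigr => b _; rewrite mulrBr.
Qed.

Lemma vnorm2_unitary (M : T -> T -> R[i]) v :
  unitary M -> vnorm2 (matapp M v) = vnorm2 v.
Proof.
move=> HM; apply: (@complexI R); rewrite /vnorm2 !rmorph_sum /=.
under eq_bigr do rewrite sqn_mulC.
under [RHS]eq_bigr do rewrite sqn_mulC.
transitivity (\sum_c \sum_b \sum_b' ((v b)^* * v b') * ((M c b)^* * M c b'))%C.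
  apply: eq_bigr => c _; rewrite /matapp rmorph_sum /= mulr_suml; apply: eq_bigr => b _.
  by rewrite mulr_sumr; apply: eq_bigr => b' _; rewrite rmorphM /=; ring.
rewrite exchange_big /=; apply: eq_bigr => b _; rewrite exchange_big /=.
rewrite (bigD1 b) //= [X in _ + X]big1 ?addr0 => [|b' b'b]; rewrite -mulr_sumr.
  by have := HM b b; under eq_bigr do rewrite cconjE; rewrite eqxx => ->; rewrite mulr1.
have := HM b b'; under eq_bigr do rewrite cconjE.
by rewrite eq_sym (negbTE b'b) => ->; rewrite mulr0.
Qed.

Lemma vnorm2_ket (a : T) : vnorm2 (@ket R T a) = 1.
Proof.
rewrite /vnorm2 (bigD1 a) //= big1 => [|b /negbTE]; rewrite /ket.
  by rewrite eqxx sqnE /= expr1n expr0n !addr0.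
by move=> ->; rewrite sqn0.
Qed.

Lemma sqr_sub_sqr_le_chord (x y x' y' : R) : 0 <= x -> 0 <= y -> 0 <= x' -> 0 <= y' ->
  x ^+ 2 + x' ^+ 2 = 1 -> y ^+ 2 + y' ^+ 2 = 1 ->
  (x ^+ 2 - y ^+ 2) ^+ 2 <= 2 - 2 * (x * y + x' * y').
Proof.
move=> x0 y0 x'0 y'0 hx hy.
(* c and d are the dot product and determinant of the unit vectors (x, x'), (y, y'):
   c^2 + d^2 = 1 and x^2 - y^2 = d e with e^2 <= 1, so (x^2 - y^2)^2 <= 1 - c^2. *)
set c := x * y + x' * y'; set d := x * y' - x' * y; set e := x * y' + x' * y.
have unit_prod : (x ^+ 2 + x' ^+ 2) * (y ^+ 2 + y' ^+ 2) = 1 by rewrite hx hy mulr1.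
have hcd : c ^+ 2 + d ^+ 2 = 1 by rewrite -unit_prod /c /d; ring.
have he : e ^+ 2 <= 1.
  have : e ^+ 2 + (x * y - x' * y') ^+ 2 = 1 by rewrite -unit_prod /e; ring.
  by have := sqr_ge0 (x * y - x' * y'); lra.
have -> : x ^+ 2 - y ^+ 2 = d * e.
  have -> : x ^+ 2 - y ^+ 2 = x ^+ 2 * (y ^+ 2 + y' ^+ 2) - y ^+ 2 * (x ^+ 2 + x' ^+ 2).
    by rewrite hx hy !mulr1.
  by rewrite /d /e; ring.
have := ler_wpM2l (sqr_ge0 d) he; rewrite mulr1 exprMn => hde.
by have := sqr_ge0 (1 - c); nra.
Qed.

Lemma outcome_prob_sub_sqr_le (P : pred T) psi phi :
  vnorm2 psi = 1 -> vnorm2 phi = 1 ->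
  (outcome_prob P psi - outcome_prob P phi) ^+ 2 <= vnorm2 (psi - phi).
Proof.
move=> psi1 phi1; rewrite vnorm2B psi1 phi1 (bigID P) /=.
have split_one v : vnorm2 v = 1 -> outcome_prob P v + outcome_prob (predC P) v = 1.
  by move=> <-; rewrite /vnorm2 (bigID P).
have cs Q := cauchy_schwarz_redot_sqrt Q psi phi.
have := sqr_sub_sqr_le_chord
  (sqrtr_ge0 (outcome_prob P psi)) (sqrtr_ge0 (outcome_prob P phi))
  (sqrtr_ge0 (outcome_prob (predC P) psi)) (sqrtr_ge0 (outcome_prob (predC P) phi)).
rewrite !sqr_sqrtr ?outcome_prob_ge0 // => /(_ (split_one _ psi1) (split_one _ phi1)).
by have := cs P; have := cs (predC P); rewrite /outcome_prob /=; lra.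
Qed.

End Vectors.

Section Circuits.
Variables (R : realType) (n q k : nat).
Local Notation state := (basis n q k -> R[i]).
Implicit Types (psi : state) (S D U X : {set bits n}).

Definition query_mass X psi : R :=
  outcome_prob (fun a : basis n q k => a.1.2 \in X) psi.

Lemma phase_oracleB D : {morph @phase_oracle R n q k D : u v / u - v}.
Proof.
by move=> u v; apply/funext => a; rewrite /phase_oracle !fctE; case: ifP; rewrite // opprD.
Qed.

Lemma vnorm2_phase_oracle D psi : vnorm2 (phase_oracle D psi) = vnorm2 psi.
Proof. by apply: eq_bigr => a _; rewrite /phase_oracle; case: ifP; rewrite // sqnN. Qed.

Lemma apply_gateB U (g : gate R n q k) : {morph apply_gate U g : u v / u - v}.
Proof. by case: g => [M|]; [apply: matappB | apply: phase_oracleB]. Qed.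

Lemma vnorm2_apply_gate U (g : gate R n q k) psi :
  gate_ok g -> vnorm2 (apply_gate U g psi) = vnorm2 psi.
Proof. by case: g => [M|] /= g_ok; [apply: vnorm2_unitary | apply: vnorm2_phase_oracle]. Qed.

Lemma apply_VB U (gs : seq (gate R n q k)) : {morph apply_V U gs : u v / u - v}.
Proof. by elim: gs => [|g gs IH] u v //=; rewrite /apply_V /= apply_gateB; apply: IH. Qed.

Lemma vnorm2_apply_V U (gs : seq (gate R n q k)) psi :
  (forall g, List.In g gs -> gate_ok g) -> vnorm2 (apply_V U gs psi) = vnorm2 psi.
Proof.
elim: gs psi => [|g gs IH] psi //= gs_ok.
rewrite /apply_V /= IH => [|g' g'_in]; last by apply: gs_ok; right.
by apply: vnorm2_apply_gate; apply: gs_ok; left.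
Qed.

Lemma vnorm2_phase_oracle_sub_le S D psi : D \subset S ->
  vnorm2 (phase_oracle S psi - phase_oracle D psi) <= 4 * query_mass (S :\: D) psi.
Proof.
move=> DS; rewrite /vnorm2 /query_mass /outcome_prob mulr_sumr [leRHS]big_mkcond.
apply: ler_sum => -[[b x] z] _; rewrite /phase_oracle !fctE in_setD /=.
case: b => /=; last by rewrite subrr sqn0; case: ifP; rewrite ?mulr_ge0 ?sqn_ge0.
case xD: (x \in D) => /=; first by rewrite (subsetP DS _ xD) subrr sqn0.
case: (x \in S) => /=; last by rewrite subrr sqn0.
by rewrite -opprD sqnN; case: (psi _) => u v /=; lra.
Qed.

Variables (V : nat -> seq (gate R n q k)) (w : bits q).
Hypothesis V_ok : forall j g, List.In g (V j) -> gate_ok g.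

Lemma vnorm2_run D U j : vnorm2 (run V D U w j) = 1.
Proof.
elim: j => [|j IH] /=;
  by rewrite vnorm2_apply_V ?vnorm2_ket ?vnorm2_phase_oracle // => g; apply: V_ok.
Qed.

Lemma vnorm_run_sub_le S D U j :
  vnorm (run V S U w j - run V D U w j) <=
  \sum_(i < j) vnorm (phase_oracle S (run V D U w i) - phase_oracle D (run V D U w i)).
Proof.
elim: j => [|j IH].
  by rewrite big_ord0 subrr /vnorm /vnorm2 big1 ?sqrtr0 // => a _; apply: sqn0.
rewrite big_ord_recr /=.
set psiD := run V D U w j.
apply: le_trans (vnormB_le _ (apply_V U (V j.+1) (phase_oracle S psiD)) _) _.
have Vj_ok := @V_ok j.+1.
rewrite /vnorm -!apply_VB !vnorm2_apply_V // -phase_oracleB vnorm2_phase_oracle.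
exact: lerD IH _.
Qed.

Lemma vnorm2_run_sub_le S D U t : D \subset S ->
  vnorm2 (run V S U w t - run V D U w t) <=
  4 * t%:R * \sum_(j < t) query_mass (S :\: D) (run V D U w j).
Proof.
move=> DS.
pose r (j : 'I_t) :=
  vnorm (phase_oracle S (run V D U w j) - phase_oracle D (run V D U w j)).
rewrite -[vnorm2 _]sqr_sqrtr ?vnorm2_ge0 //.
apply: (@le_trans _ _ ((\sum_j r j) ^+ 2)).
  have sum_r_ge0 : 0 <= \sum_j r j by apply: sumr_ge0 => j _; apply: sqrtr_ge0.
  by rewrite ler_sqr ?nnegrE ?sqrtr_ge0 //; apply: (vnorm_run_sub_le S D U t).
apply: le_trans (sqr_sum_le_card r) _.
rewrite card_ord -mulrA mulrCA ler_wpM2l // mulr_sumr; apply: ler_sum => j _.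
by rewrite /r /vnorm sqr_sqrtr ?vnorm2_ge0 // vnorm2_phase_oracle_sub_le.
Qed.

Lemma query_mass_le_sampler_prob U D X t : [disjoint X & D] ->
  t%:R^-1 * \sum_(j < t) query_mass X (run V D U w j) <=
  \sum_(y in X) sampler_prob t V U D w y.
Proof.
move=> XD; rewrite /sampler_prob -mulr_sumr ler_wpM2l ?invr_ge0 //.
rewrite [leRHS]exchange_big /=; apply: ler_sum => j _; rewrite /query_mass /outcome_prob.
rewrite (partition_big (fun a : basis n q k => sampler_out D a.1.2) (mem X)) /=; last first.
  by move=> a aX; rewrite /sampler_out (disjointFr XD aX).
apply: ler_sum => y _; rewrite [leRHS]big_mkcond [leLHS]big_mkcond /=.
by apply: ler_sum => a _; case: (a.1.2 \in X); case: (_ == y); rewrite /= ?lexx ?sqn_ge0.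
Qed.

End Circuits.

Theorem mainTheorem6 (R : realType) (n q k t : nat)
  (V : nat -> seq (gate R n q k))
  (* A is a quantum query algorithm: each V_j is a product of unitaries and U-queries *)
  (HVunit : forall (j : nat) (g : gate R n q k), Stdlib.Lists.List.In g (V j) -> gate_ok g)
  (* A makes t queries to U (inside V_0, ..., V_t) and t queries to S *)
  (HUq : (\sum_(j < t.+1) count (@isQU R n q k) (V j))%N = t)
  (* A decides spectral Forrelation with a q-bit classical witness *)
  (Hyes : forall S U : {set bits n}, 59 / 100 <= forr R S U ->
            exists w : bits q, 2 / 3 <= accept_prob t V S U w)
  (Hno : forall S U : {set bits n}, forr R S U <= 57 / 100 ->
            forall w : bits q, accept_prob t V S U w <= 1 / 3)
  (S U D : {set bits n}) (w : bits q)
  (HS : 59 / 100 <= forr R S U)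
  (HD : D \subset S)
  (HDU : forr R D U <= 57 / 100)
  (Hw : 2 / 3 <= accept_prob t V S U w) :
  (forall j : nat, (j < t)%N -> (sampler_U_queries V j <= t)%N) /\
  1 / (36 * t%:R ^+ 2) <= \sum_(y in S :\: D) sampler_prob t V U D w y.
Proof.
split=> [j lt_jt|].
  rewrite /sampler_U_queries -HUq -!(big_mkord xpredT (fun i => count _ (V i))).
  by rewrite (big_cat_nat (leq0n j.+1) (leqW lt_jt)) leq_addr.
have far : 1 / 9 <= vnorm2 (run V S U w t - run V D U w t).
  have : (accept_prob t V S U w - accept_prob t V D U w) ^+ 2 <=
         vnorm2 (run V S U w t - run V D U w t) :=
    outcome_prob_sub_sqr_le _ (vnorm2_run w HVunit S U t) (vnorm2_run w HVunit D U t).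
  by have := Hno D U HDU w; nra.
have := vnorm2_run_sub_le w HVunit U t HD.
have SD_D : [disjoint S :\: D & D].
  by rewrite -setI_eq0 setDE -setIA (setIC (~: D)) setICr setI0.
have := query_mass_le_sampler_prob V w U t SD_D.
set m := \sum_(j < t) _ => sampler hybrid.
have mass : 1 / 9 <= 4 * t%:R * m := le_trans far hybrid.
have t_gt0 : 0 < t%:R :> R.
  rewrite ltr0n lt0n; apply: contraTneq mass => ->; rewrite mulr0 mul0r; lra.
apply: le_trans sampler.
have -> : 1 / (36 * t%:R ^+ 2) = t%:R^-1 * (1 / (36 * t%:R)) :> R.
  by field; rewrite gt_eqF.
apply: ler_wpM2l; first by rewrite invr_ge0 ltW.
by rewrite ler_pdivrMr ?mulr_gt0 //; lra.
Qed.
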